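(* Let $k\ge1$ and let $\Gamma\subset\mathbb{R}_+^k$ be a nonempty compact set. Let $\mu_n=(q_n,s_n,b_n)$, $n=1,2,\dots$, and $\mu=(q,s,b)$ be mechanisms in $\mathcal{M}_\Gamma$. If every $\mu_n$ is monotonic, $b_n$ converges pointwise to $b$ on $\mathbb{R}^k$, and $\mu$ is seller favorable, then $\mu$ is monotonic.
   Context: A $\Gamma$-mechanism consists of $q:\mathbb{R}_+^k\to\Gamma$ and $s:\mathbb{R}_+^k\to\mathbb{R}$; it is IC if $q(x)\cdot x-s(x)\ge q(y)\cdot x-s(y)$ for all $x,y\in\mathbb{R}_+^k$, IR if $q(x)\cdot x-s(x)\ge0$ for all $x\in\mathbb{R}_+^k$, and NPT if $s(x)\ge0$ for all $x\in\mathbb{R}_+^k$. $\mathcal{M}_\Gamma$ is the set of IC, IR and NPT $\Gamma$-mechanisms. The buyer payoff function is $b:\mathbb{R}^k\to\mathbb{R}$, $b(x):=\sup_{z\in\mathbb{R}_+^k}[q(z)\cdot x-s(z)]$; a mechanism is written $\mu=(q,s,b)$. For convex $f$, $f'(x;y):=\lim_{\delta\to0^+}(f(x+\delta y)-f(x))/\delta$. $\mu\in\mathcal{M}_\Gamma$ is seller favorable if $s(x)=b'(x;x)-b(x)$ for all $x\in\mathbb{R}_+^k$. A mechanism is monotonic if $s(y)\ge s(x)$ whenever $y\ge x$ (coordinatewise) in $\mathbb{R}_+^k$. *)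

From HB Require Import structures.
From mathcomp Require Import all_boot all_order all_algebra.
From mathcomp Require Import all_classical all_reals all_analysis.
Set Implicit Arguments. Unset Strict Implicit. Unset Printing Implicit Defensive.
Import Order.TTheory GRing.Theory Num.Theory.
Import numFieldNormedType.Exports.
Local Open Scope classical_set_scope.
Local Open Scope ring_scope.

Section Defs.
Variables (R : realType) (k : nat).
Notation vec := 'rV[R]_k.

Definition nonneg (x : vec) : Prop := forall i, 0 <= x ord0 i.

Definition vle (x y : vec) : Prop := forall i, x ord0 i <= y ord0 i.

Definition dot (u v : vec) : R := \sum_(i < k) u ord0 i * v ord0 i.

Definition buyer_payoff (q : vec -> vec) (s : vec -> R) (x : vec) : R :=
  sup [set dot (q z) x - s z | z in nonneg].

Definition Gamma_mechanism (Gamma : set vec) (q : vec -> vec) : Prop :=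
  forall x, nonneg x -> Gamma (q x).

Definition IC (q : vec -> vec) (s : vec -> R) : Prop :=
  forall x y, nonneg x -> nonneg y -> dot (q x) x - s x >= dot (q y) x - s y.

Definition IR (q : vec -> vec) (s : vec -> R) : Prop :=
  forall x, nonneg x -> dot (q x) x - s x >= 0.

Definition NPT (s : vec -> R) : Prop := forall x, nonneg x -> s x >= 0.

Definition in_M (Gamma : set vec) (q : vec -> vec) (s : vec -> R) : Prop :=
  [/\ Gamma_mechanism Gamma q, IC q s, IR q s & NPT s].

Definition dir_deriv (f : vec -> R) (x y : vec) : R :=
  lim ((fun d : R => (f (x + d *: y) - f x) / d) @ 0^'+).

Definition seller_favorable (q : vec -> vec) (s : vec -> R) : Prop :=
  forall x, nonneg x ->
    s x = dir_deriv (buyer_payoff q s) x x - buyer_payoff q s x.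

Definition monotonic (s : vec -> R) : Prop :=
  forall x y, nonneg x -> nonneg y -> vle x y -> s x <= s y.

End Defs.

From HB Require Import structures.
From mathcomp Require Import all_boot all_order all_algebra.
From mathcomp Require Import all_classical all_reals all_analysis.
From mathcomp Require Import ring lra.
Import Order.TTheory GRing.Theory Num.Theory.
Import numFieldNormedType.Exports.
Local Open Scope classical_set_scope.
Local Open Scope ring_scope.
Set Implicit Arguments. Unset Strict Implicit.

(* For an IC
   mechanism the scale gap b(tx) - t b(x) lies between (t-1) s(x) and
   (t-1) s(tx).  Hence, when s is monotone, x <= y and t, u >= 1,
     (u-1) (b(tx) - t b(x)) <= (t-1) (b(u(ty)) - u b(ty)),
   an inequality that mentions only b and therefore survives the pointwise
   limit b_n --> b.  For the limit mechanism, bounding both sides by payments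
   again and choosing u = 1 + d/2, ut = 1 + d gives
     (s(x) + s(y)) / 2 <= (b(y + dy) - b(y)) / d - b(y);
   as d --> 0+ the right-hand side tends to b'(y;y) - b(y) = s(y) (the
   quotient converges since b is convex along rays), so s(x) <= s(y). *)

Section SupportedSecants.
Variables (R : realType) (phi g : R -> R).
Hypothesis phi_supported :
  forall a c, 0 <= a -> 0 <= c -> phi a + (c - a) * g a <= phi c.

Lemma secant_ge d : 0 < d -> g 0 <= (phi d - phi 0) / d.
Proof.
move=> d0; rewrite ler_pdivlMr //.
have := phi_supported (lexx 0) (ltW d0); lra.
Qed.

Lemma secant_nondecreasing d1 d2 : 0 < d1 -> d1 <= d2 ->
  (phi d1 - phi 0) / d1 <= (phi d2 - phi 0) / d2.
Proof.
move=> d1_gt0 d12; have d2_gt0 : 0 < d2 by exact: lt_le_trans d12.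
rewrite ler_pdivrMr // mulrAC ler_pdivlMr //.
have to0 := phi_supported (ltW d1_gt0) (lexx 0).
have to2 := phi_supported (ltW d1_gt0) (ltW d2_gt0).
have p1 : 0 <= (d2 - d1) * (d1 * g d1 - phi d1 + phi 0).
  by apply: mulr_ge0; lra.
have p2 : 0 <= d1 * (phi d2 - phi d1 - (d2 - d1) * g d1).
  by apply: mulr_ge0; lra.
lra.
Qed.

Lemma secant_cvg : cvg ((fun d => (phi d - phi 0) / d) @ 0^'+).
Proof.
apply: nondecreasing_at_right_is_cvgr.
- near=> e => a c; rewrite !in_itv /= => /andP[a_gt0 _] /andP[c_gt0 _].
  exact: secant_nondecreasing.
- near=> e; exists (g 0) => _ [d + <-].
  by rewrite /= in_itv /= => /andP[d_gt0 _]; exact: secant_ge.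
Unshelve. all: by end_near.
Qed.

End SupportedSecants.

Section Mechanisms.
Variables (R : realType) (k : nat).
Implicit Types (x y z : 'rV[R]_k) (q : 'rV[R]_k -> 'rV[R]_k) (s : 'rV[R]_k -> R).

Lemma dotZr (u v : 'rV[R]_k) c : dot u (c *: v) = c * dot u v.
Proof. by rewrite /dot mulr_sumr; apply: eq_bigr => i _; rewrite mxE mulrCA. Qed.

Lemma nonnegZ c x : 0 <= c -> nonneg x -> nonneg (c *: x).
Proof. by move=> c_ge0 hx i; rewrite mxE mulr_ge0. Qed.

Definition scale_gap (f : 'rV[R]_k -> R) t x := f (t *: x) - t * f x.

Section IncentiveCompatible.
Variables (q : 'rV[R]_k -> 'rV[R]_k) (s : 'rV[R]_k -> R).
Hypothesis hic : IC q s.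
Notation b := (buyer_payoff q s).

Lemma buyer_payoff_IC x : nonneg x -> b x = dot (q x) x - s x.
Proof.
move=> hx; have ub : forall z, nonneg z -> dot (q z) x - s z <= dot (q x) x - s x.
  by move=> z hz; apply: hic.
apply/le_anti/andP; split.
- by apply: ge_sup; [exists (dot (q x) x - s x), x | move=> _ [z hz <-]; apply: ub].
- apply: ub_le_sup; last by exists x.
  by exists (dot (q x) x - s x) => _ [z hz <-]; apply: ub.
Qed.

Lemma buyer_payoff_ge x z : nonneg x -> nonneg z -> dot (q z) x - s z <= b x.
Proof. by move=> hx hz; rewrite buyer_payoff_IC //; apply: hic. Qed.

Lemma scale_gap_le x t : nonneg x -> 0 <= t ->
  scale_gap b t x <= (t - 1) * s (t *: x).
Proof.
move=> hx t_ge0; have htx := nonnegZ t_ge0 hx.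
have := buyer_payoff_ge hx htx; rewrite /scale_gap (buyer_payoff_IC htx) dotZr.
nra.
Qed.

Lemma scale_gap_ge x t : nonneg x -> 0 <= t -> (t - 1) * s x <= scale_gap b t x.
Proof.
move=> hx t_ge0; have := buyer_payoff_ge (nonnegZ t_ge0 hx) hx.
rewrite /scale_gap dotZr (buyer_payoff_IC hx); lra.
Qed.

Lemma buyer_payoff_ray_supported x : nonneg x -> forall a c, 0 <= a -> 0 <= c ->
  b ((1 + a) *: x) + (c - a) * dot (q ((1 + a) *: x)) x <= b ((1 + c) *: x).
Proof.
move=> hx a c a_ge0 c_ge0.
have hax : nonneg ((1 + a) *: x) by apply: nonnegZ => //; lra.
have hcx : nonneg ((1 + c) *: x) by apply: nonnegZ => //; lra.
have := buyer_payoff_ge hcx hax.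
rewrite (buyer_payoff_IC hax) !dotZr; lra.
Qed.

Lemma buyer_payoff_dir_quotient_cvg x : nonneg x ->
  cvg ((fun d => (b (x + d *: x) - b x) / d) @ 0^'+).
Proof.
move=> hx; have -> : (fun d => (b (x + d *: x) - b x) / d) =
    (fun d => (b ((1 + d) *: x) - b ((1 + 0) *: x)) / d).
  by apply/funext => d; rewrite addr0 scale1r scalerDl scale1r.
exact: secant_cvg (buyer_payoff_ray_supported hx).
Qed.

End IncentiveCompatible.

Definition scale_gap_monotone (f : 'rV[R]_k -> R) : Prop :=
  forall x y t u, nonneg x -> nonneg y -> vle x y -> 1 <= t -> 1 <= u ->
  (u - 1) * scale_gap f t x <= (t - 1) * scale_gap f u (t *: y).

Lemma monotonic_scale_gap_monotone q s :
  IC q s -> monotonic s -> scale_gap_monotone (buyer_payoff q s).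
Proof.
move=> hic hmon x y t u hx hy hxy t_ge1 u_ge1.
have t_ge0 : 0 <= t by lra.
have s_txy : s (t *: x) <= s (t *: y).
  by apply: hmon; try exact: nonnegZ; move=> i; rewrite !mxE ler_wpM2l.
have gap_x := scale_gap_le hic hx t_ge0.
have gap_ty := scale_gap_ge hic (nonnegZ t_ge0 hy) (le_trans ler01 u_ge1).
have p1 : 0 <= (u - 1) * ((t - 1) * s (t *: x) - scale_gap (buyer_payoff q s) t x).
  by apply: mulr_ge0; lra.
have p2 : 0 <= (u - 1) * (t - 1) * (s (t *: y) - s (t *: x)).
  by apply: mulr_ge0; [apply: mulr_ge0|]; lra.
have p3 : 0 <= (t - 1) *
    (scale_gap (buyer_payoff q s) u (t *: y) - (u - 1) * s (t *: y)).
  by apply: mulr_ge0; lra.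
nra.
Qed.

Lemma scale_gap_monotone_limit (f : nat -> 'rV[R]_k -> R) (g : 'rV[R]_k -> R) :
  (forall n, scale_gap_monotone (f n)) ->
  (forall x, (fun n => f n x) @ \oo --> g x) ->
  scale_gap_monotone g.
Proof.
move=> hf hcvg x y t u hx hy hxy t_ge1 u_ge1; rewrite -subr_ge0.
apply: (cvgr_to_ge (F := \oo) (f := fun n =>
  (t - 1) * scale_gap (f n) u (t *: y) - (u - 1) * scale_gap (f n) t x)).
  by apply: cvgB; apply: cvgM; try exact: cvg_cst; apply: cvgB => //;
    apply: cvgM => //; exact: cvg_cst.
by near=> n; rewrite subr_ge0; apply: hf.
Unshelve. all: by end_near.
Qed.

Section SellerFavorable.
Variables (q : 'rV[R]_k -> 'rV[R]_k) (s : 'rV[R]_k -> R).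
Hypotheses (hic : IC q s) (hsf : seller_favorable q s)
  (hgap : scale_gap_monotone (buyer_payoff q s)).
Notation b := (buyer_payoff q s).

Lemma payments_le_scale_gap x y t u : nonneg x -> nonneg y -> vle x y ->
  1 < t -> 1 <= u -> (u - 1) * s x + u * (t - 1) * s y <= scale_gap b (u * t) y.
Proof.
move=> hx hy hxy t_gt1 u_ge1.
have t_ge0 : 0 <= t by lra.
have t1_gt0 : 0 < t - 1 by rewrite subr_gt0.
have sx_le : (u - 1) * s x <= scale_gap b u (t *: y).
  rewrite -(ler_pM2l t1_gt0); apply: le_trans (hgap hx hy hxy _ _) => //.
  - by rewrite mulrCA ler_wpM2l ?subr_ge0 //; exact: scale_gap_ge.
  - exact: ltW.
have sy_le := ler_wpM2l (le_trans ler01 u_ge1) (scale_gap_ge hic hy t_ge0).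
rewrite /scale_gap -scalerA in sx_le sy_le *; lra.
Qed.

Lemma mean_payment_le_quotient x y d : nonneg x -> nonneg y -> vle x y -> 0 < d ->
  (s x + s y) / 2 <= (b (y + d *: y) - b y) / d - b y.
Proof.
move=> hx hy hxy d_gt0.
have [u [t [u_ge1 t_gt1 ut ut1 u1]]] : exists u t, [/\ 1 <= u, 1 < t,
    u * t = 1 + d, u * (t - 1) = d / 2 & u - 1 = d / 2].
  have u_gt0 : 0 < 1 + d / 2 by lra.
  exists (1 + d / 2), ((1 + d) / (1 + d / 2)); split.
  - lra.
  - by rewrite ltr_pdivlMr //; lra.
  - by rewrite mulrC divfK ?gt_eqF.
  - by rewrite mulrBr mulrC divfK ?gt_eqF //; field.
  - by ring.
have := payments_le_scale_gap hx hy hxy t_gt1 u_ge1.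
rewrite ut ut1 u1 /scale_gap scalerDl scale1r.
have -> : (b (y + d *: y) - b y) / d - b y = (b (y + d *: y) - (1 + d) * b y) / d.
  by field; rewrite gt_eqF.
rewrite ler_pdivlMr //; lra.
Qed.

Lemma seller_favorable_monotonic : monotonic s.
Proof.
move=> x y hx hy hxy.
have mean_le : (s x + s y) / 2 + b y <= dir_deriv b y y.
  apply: limr_ge; first exact: buyer_payoff_dir_quotient_cvg.
  near=> d; have d_gt0 : 0 < d by near: d; exact: nbhs_right_gt.
  have := mean_payment_le_quotient hx hy hxy d_gt0; lra.
have := hsf hy; lra.
Unshelve. all: by end_near.
Qed.

End SellerFavorable.
End Mechanisms.

Theorem proposition5 (R : realType) (k : nat) (hk : (1 <= k)%N)
  (Gamma : set 'rV[R]_k) (hGne : Gamma !=set0) (hGsub : Gamma `<=` nonneg (k:=k))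
  (hGc : compact Gamma)
  (qn : nat -> 'rV[R]_k -> 'rV[R]_k) (sn : nat -> 'rV[R]_k -> R)
  (q : 'rV[R]_k -> 'rV[R]_k) (s : 'rV[R]_k -> R) :
  (forall n, in_M Gamma (qn n) (sn n)) ->
  in_M Gamma q s ->
  (forall n, monotonic (sn n)) ->
  (forall x : 'rV[R]_k,
     (fun n => buyer_payoff (qn n) (sn n) x) @ \oo --> buyer_payoff q s x) ->
  seller_favorable q s ->
  monotonic s.
Proof.
move=> hn [_ hic _ _] hmon hconv hsf.
apply: seller_favorable_monotonic hic hsf _.
apply: scale_gap_monotone_limit hconv => n.
by case: (hn n) => _ hicn _ _; exact: monotonic_scale_gap_monotone.
Qed.
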